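(* Let $q\in(0,1)$ and let $W\in[0,1]^{I\times I}$ be symmetric ($W=W^*$). Consider the Probabilistic Broadcast Gossip Algorithm: at each time $t$, a node $j$ is drawn uniformly at random from $I$; each node $i\ne j$ independently receives $x_j(t)$ with probability $W_{ij}$, and then sets $x_i(t+1)=x_i(t)+q(x_j(t)-x_i(t))$; all other nodes keep $x_k(t+1)=x_k(t)$. The random choices at different times are independent. Writing this as $x(t+1)=x(t)-L(t)x(t)$, one has $\mathbf{1}^*\mathbb{E}[L(t)]=0$ and $$\mathbb{E}[L(t)^*\mathbf{1}\mathbf{1}^*L(t)]\le\gamma\,\mathbb{E}[L(t)+L(t)^*-L(t)^*L(t)]\quad\text{with }\gamma=(W_{\max}+1)\frac{q}{1-q},$$ where $W_{\max}=\max_{i\in I}\sum_{j\in I}W_{ij}$; consequently $\mathbb{E}[(\bar x(t)-\bar x(0))^2]\le\frac{\gamma}{N+\gamma}V(x(0))$ for all $t\ge0$.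
   Context: $I$ is a finite set of $N$ nodes, $x(0)\in\mathbb{R}^I$ deterministic. For the update above, $L(t)$ is the Laplacian of the random weight matrix $a_{ij}(t)$ (where $a_{ij}(t)=q$ if $j$ is the broadcasting node and $i\neq j$ received, and $0$ otherwise for $i\ne j$): $L_{ij}(t)=-a_{ij}(t)$ for $i\ne j$, $L_{ii}(t)=\sum_{j\ne i}a_{ij}(t)$. $\mathbf{1}$ is the all-ones vector, $M^*$ the transpose; $\bar y=\frac1N\sum_i y_i$, $V(y)=\frac1N\sum_i(y_i-\bar y)^2$. For square matrices, $A\le B$ means $A-B$ is negative semidefinite. *)

From HB Require Import structures.
From mathcomp Require Import all_boot all_order all_algebra.
Set Implicit Arguments. Unset Strict Implicit. Unset Printing Implicit Defensive.
Import Order.TTheory GRing.Theory Num.Theory.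
Local Open Scope ring_scope.

Section PBGA.
Variables (R : realFieldType) (N : nat) (q : R) (W : 'M[R]_N).

(* Probability of the one-step outcome (j, S): node j broadcasts and exactly
   the nodes of S (which must not contain j) receive.  j is uniform, each
   i <> j receives independently with probability W i j. *)
Definition pr (j : 'I_N) (S : {set 'I_N}) : R :=
  if j \in S then 0
  else N%:R^-1 * \prod_(i | i != j) (if i \in S then W i j else 1 - W i j).

Definition step (j : 'I_N) (S : {set 'I_N}) (x : 'cV[R]_N) : 'cV[R]_N :=
  \col_i (if (i \in S) && (i != j) then x i 0 + q * (x j 0 - x i 0) else x i 0).

Definition aw (j : 'I_N) (S : {set 'I_N}) (i k : 'I_N) : R :=
  if (k == j) && (i != j) && (i \in S) then q else 0.

Definition Lmat (j : 'I_N) (S : {set 'I_N}) : 'M[R]_N :=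
  \matrix_(i, k) (if i == k then \sum_(k' | k' != i) aw j S i k' else - aw j S i k).

Definition ExpM (F : 'M[R]_N -> 'M[R]_N) : 'M[R]_N :=
  \sum_j \sum_(S : {set 'I_N}) pr j S *: F (Lmat j S).

(* E[ f(x(t)) ] starting from x(0) = x, with independent steps. *)
Fixpoint Ex (t : nat) (x : 'cV[R]_N) (f : 'cV[R]_N -> R) : R :=
  match t with
  | 0 => f x
  | t'.+1 => \sum_j \sum_(S : {set 'I_N}) pr j S * Ex t' (step j S x) f
  end.

End PBGA.

Definition avg (R : realFieldType) (N : nat) (y : 'cV[R]_N) : R :=
  N%:R^-1 * \sum_i y i 0.

Definition Var (R : realFieldType) (N : nat) (y : 'cV[R]_N) : R :=
  N%:R^-1 * \sum_i (y i 0 - avg y) ^+ 2.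

Definition Wmax (R : realFieldType) (N : nat) (W : 'M[R]_N) : R :=
  \big[Num.max/0]_i \sum_j W i j.

Definition loewner_le (R : realFieldType) (N : nat) (A B : 'M[R]_N) : Prop :=
  forall v : 'cV[R]_N, (v^T *m (A - B) *m v) 0 0 <= 0.

Definition ones (R : realFieldType) (N : nat) : 'cV[R]_N := const_mx 1.

From HB Require Import structures.
From mathcomp Require Import all_boot all_order all_algebra.
From mathcomp Require Import ring lra.
Import Order.TTheory GRing.Theory Num.Theory.
Set Implicit Arguments. Unset Strict Implicit. Unset Printing Implicit Defensive.
Local Open Scope ring_scope.

(* One step is driven by the outcome (j, S): j broadcasts and
   the set S of receivers is drawn from a product of independent Bernoulli
   laws.  For j \notin S the Laplacian acts by (L u)_i = [i \in S] q (u_i - u_j)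
   (the "flow"), and x(t+1) = x(t) - L x(t).
   1. Bernoulli products: first and second moments of sum_i [i \in S] c_i;
      the second moment is at most (M + 1) sum_i p_i c_i^2 when sum_i p_i <= M.
   2. Expanding the two quadratic forms of the statement in terms of the flow
      and using the symmetry of W, the expected flow sum E[1^T L u] vanishes
      and E[(1^T L u)^2] <= gamma E[u^T (L + L^T - L^T L) u]: this gives the
      first two claims.
   3. For a constant c, the Lyapunov function
        lyap c y = (sum_i (y_i - c))^2 + gamma sum_i (y_i - c)^2
      is a supermartingale by 2., so E[lyap c x(t)] <= lyap c x(0); with
      c = avg x(0) and (avg y - c)^2 <= lyap c y / (N (N + gamma)) this yields
      the third claim. *)

(* Weighted Cauchy-Schwarz inequality, via the nonnegative double sum
   sum_{i,k} p_i p_k (d_i - d_k)^2 = 2 (P Q - m^2). *)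
Lemma weighted_cauchy_schwarz (R : realFieldType) (I : finType) (p d : I -> R) :
  (forall i, 0 <= p i) ->
  (\sum_i p i * d i) ^+ 2 <= (\sum_i p i) * (\sum_i p i * d i ^+ 2).
Proof.
move=> p_ge0.
have double_sum :
    (\sum_i p i) * (\sum_i p i * d i ^+ 2) + (\sum_i p i * d i ^+ 2) * (\sum_i p i)
    - 2 * ((\sum_i p i * d i) * (\sum_i p i * d i))
  = \sum_i \sum_k p i * p k * (d i - d k) ^+ 2.
  rewrite !big_distrlr mulr_sumr -big_split -sumrB /=; apply: eq_bigr => i _.
  by rewrite mulr_sumr -big_split -sumrB /=; apply: eq_bigr => k _; ring.
have : 0 <= \sum_i \sum_k p i * p k * (d i - d k) ^+ 2.
  by apply: sumr_ge0 => i _; apply: sumr_ge0 => k _; rewrite mulr_ge0 ?sqr_ge0 ?mulr_ge0.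
rewrite -double_sum expr2; lra.
Qed.

Section BernoulliProduct.
Variables (R : comNzRingType) (I : finType) (p : I -> R).

Definition bern (S : {set I}) : R :=
  \prod_l (if l \in S then p l else 1 - p l).

Lemma sum_prod_set (h : I -> bool -> R) :
  \sum_(S : {set I}) \prod_i h i (i \in S) = \prod_i (h i true + h i false).
Proof.
transitivity (\prod_i \sum_(b : bool) h i b); last first.
  by apply: eq_bigr => i _; rewrite big_bool.
rewrite bigA_distr_bigA (reindex (fun g : {ffun I -> bool} => [set x | g x])) /=.
  by apply: eq_bigr => g _; apply: eq_bigr => i _; rewrite inE.
exists (fun S : {set I} => [ffun x => x \in S]) => g _.
  by apply/ffunP => x; rewrite ffunE inE.
by apply/setP => x; rewrite inE ffunE.
Qed.

Lemma bern_marginal (T : {set I}) :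
  \sum_S bern S * \prod_(l in T) (l \in S)%:R = \prod_(l in T) p l.
Proof.
pose h l (b : bool) := (if b then p l else 1 - p l) * (if l \in T then b%:R else 1).
have factor S : bern S * \prod_(l in T) (l \in S)%:R = \prod_l h l (l \in S).
  by rewrite /bern /h big_split /= [in X in _ * X = _]big_mkcond.
rewrite (eq_bigr _ (fun S _ => factor S)) sum_prod_set [RHS]big_mkcond /=.
apply: eq_bigr => l _; rewrite /h; case: (l \in T) => /=.
  by rewrite mulr1 mulr0 addr0.
by rewrite !mulr1 addrC subrK.
Qed.

Lemma bern_total : \sum_S bern S = 1.
Proof.
have := bern_marginal set0; rewrite big_set0 => <-.
by apply: eq_bigr => S _; rewrite big_set0 mulr1.
Qed.

Lemma bern_moment1 i : \sum_S bern S * (i \in S)%:R = p i.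
Proof.
have := bern_marginal [set i]; rewrite big_set1 => <-.
by apply: eq_bigr => S _; rewrite big_set1.
Qed.

Lemma bern_moment2 i k : i != k ->
  \sum_S bern S * ((i \in S)%:R * (k \in S)%:R) = p i * p k.
Proof.
move=> ik; have i_notin_k : i \notin [set k] by rewrite inE.
have := bern_marginal (i |: [set k]); rewrite big_setU1 // big_set1 => <-.
by apply: eq_bigr => S _; rewrite big_setU1 // big_set1.
Qed.

Lemma bern_linear (c : I -> R) :
  \sum_S bern S * \sum_i (i \in S)%:R * c i = \sum_i p i * c i.
Proof.
under eq_bigr do rewrite mulr_sumr.
rewrite exchange_big /=; apply: eq_bigr => i _.
rewrite -bern_moment1 mulr_suml; apply: eq_bigr => S _; ring.
Qed.

Lemma bern_second_moment (c : I -> R) :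
  \sum_S bern S * (\sum_i (i \in S)%:R * c i) ^+ 2
  = (\sum_i p i * c i) ^+ 2 + \sum_i p i * (1 - p i) * c i ^+ 2.
Proof.
have moment2 i k : \sum_S bern S * ((i \in S)%:R * (k \in S)%:R)
                   = if i == k then p i else p i * p k.
  case: eqVneq => [<-|ik]; last exact: bern_moment2.
  rewrite -bern_moment1; apply: eq_bigr => S _.
  by case: (i \in S); rewrite ?mulr1 ?mulr0.
transitivity (\sum_i \sum_k c i * c k * (if i == k then p i else p i * p k)).
  have expand S : bern S * (\sum_i (i \in S)%:R * c i) ^+ 2
      = \sum_i \sum_k bern S * ((i \in S)%:R * c i * ((k \in S)%:R * c k)).
    rewrite expr2 mulr_suml mulr_sumr; apply: eq_bigr => i _.
    by rewrite !mulr_sumr.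
  rewrite (eq_bigr _ (fun S _ => expand S)) exchange_big /=; apply: eq_bigr => i _.
  rewrite exchange_big /=; apply: eq_bigr => k _.
  rewrite -moment2 mulr_sumr; apply: eq_bigr => S _; ring.
rewrite expr2 big_distrlr -big_split /=; apply: eq_bigr => i _.
rewrite (bigD1 i) //= eqxx [X in _ = X + _](bigD1 i) //=.
have off_diag : \sum_(k | k != i) c i * c k * (if i == k then p i else p i * p k)
                = \sum_(k | k != i) p i * c i * (p k * c k).
  by apply: eq_bigr => k ki; rewrite eq_sym (negPf ki); ring.
rewrite off_diag; ring.
Qed.

End BernoulliProduct.

(* The second moment of sum_i [i \in S] c_i is at most (M + 1) sum_i p_i c_i^2
   when 0 <= p_i <= 1 and sum_i p_i <= M: Cauchy-Schwarz bounds the squared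
   mean, p_i (1 - p_i) <= p_i bounds the variance. *)
Lemma bern_second_moment_le (R : realFieldType) (I : finType) (p c : I -> R) (M : R) :
  (forall i, 0 <= p i <= 1) -> \sum_i p i <= M ->
  \sum_S bern p S * (\sum_i (i \in S)%:R * c i) ^+ 2
    <= (M + 1) * \sum_i p i * c i ^+ 2.
Proof.
move=> p01 sum_le; rewrite bern_second_moment.
have p_ge0 i : 0 <= p i by case/andP: (p01 i).
have mean_sq := weighted_cauchy_schwarz c p_ge0.
have pos : 0 <= \sum_i p i * c i ^+ 2.
  by apply: sumr_ge0 => i _; rewrite mulr_ge0 ?sqr_ge0.
have mass : (\sum_i p i) * (\sum_i p i * c i ^+ 2) <= M * \sum_i p i * c i ^+ 2.
  by rewrite ler_wpM2r.
have variance : \sum_i p i * (1 - p i) * c i ^+ 2 <= \sum_i p i * c i ^+ 2.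
  apply: ler_sum => i _; rewrite -subr_ge0.
  have -> : p i * c i ^+ 2 - p i * (1 - p i) * c i ^+ 2 = (p i * c i) ^+ 2 by ring.
  exact: sqr_ge0.
lra.
Qed.

Lemma dot_colE (R : realFieldType) (N : nat) (a b : 'cV[R]_N) :
  (a^T *m b) 0 0 = \sum_i a i 0 * b i 0.
Proof. by rewrite mxE; apply: eq_bigr => i _; rewrite mxE. Qed.

Lemma qf_outer_ones (R : realFieldType) (N : nat) (L : 'M[R]_N) (u : 'cV[R]_N) :
  (u^T *m (L^T *m ones R N *m (ones R N)^T *m L) *m u) 0 0
  = (\sum_i (L *m u) i 0) ^+ 2.
Proof.
have -> : u^T *m (L^T *m ones R N *m (ones R N)^T *m L) *m u
          = ((L *m u)^T *m ones R N) *m ((ones R N)^T *m (L *m u)).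
  by rewrite trmx_mul !mulmxA.
rewrite mxE big_ord1 !dot_colE expr2.
by congr (_ * _); apply: eq_bigr => i _; rewrite !mxE ?mulr1 ?mul1r.
Qed.

Lemma qf_contraction (R : realFieldType) (N : nat) (L : 'M[R]_N) (u : 'cV[R]_N) :
  (u^T *m (L + L^T - L^T *m L) *m u) 0 0
  = \sum_i (2 * u i 0 * (L *m u) i 0 - (L *m u) i 0 ^+ 2).
Proof.
have -> : u^T *m (L + L^T - L^T *m L) *m u
          = u^T *m (L *m u) + (L *m u)^T *m u - (L *m u)^T *m (L *m u).
  by rewrite mulmxBr mulmxDr mulmxBl mulmxDl !trmx_mul !mulmxA.
have entryDB (A B C : 'M[R]_1) : (A + B - C) 0 0 = A 0 0 + B 0 0 - C 0 0.
  by rewrite !mxE.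
rewrite entryDB !dot_colE -big_split -sumrB /=.
by apply: eq_bigr => i _; ring.
Qed.

Section Model.
Variables (R : realFieldType) (N : nat) (q : R) (W : 'M[R]_N).

Definition recv (j i : 'I_N) : R := if i == j then 0 else W i j.

Lemma prE (j : 'I_N) (S : {set 'I_N}) : pr W j S = N%:R^-1 * bern (recv j) S.
Proof.
rewrite /pr /bern [in RHS](bigD1 j) //= /recv eqxx.
case: ifP => jS; first by rewrite mul0r mulr0.
rewrite subr0 mul1r; congr (_ * _); apply: eq_bigr => i ij.
by rewrite (negPf ij).
Qed.

Definition Eout (f : 'I_N -> {set 'I_N} -> R) : R :=
  \sum_j \sum_S pr W j S * f j S.

Lemma Eout_bern (f : 'I_N -> {set 'I_N} -> R) :
  Eout f = N%:R^-1 * \sum_j \sum_S bern (recv j) S * f j S.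
Proof.
rewrite /Eout mulr_sumr; apply: eq_bigr => j _.
by rewrite mulr_sumr; apply: eq_bigr => S _; rewrite prE mulrA.
Qed.

(* Outcomes with j \in S have probability zero. *)
Lemma Eout_ext (f g : 'I_N -> {set 'I_N} -> R) :
  (forall j (S : {set 'I_N}), j \notin S -> f j S = g j S) -> Eout f = Eout g.
Proof.
move=> fg; apply: eq_bigr => j _; apply: eq_bigr => S _.
case: (boolP (j \in S)) => jS; last by rewrite fg.
by rewrite /pr jS !mul0r.
Qed.

Lemma EoutD (f g : 'I_N -> {set 'I_N} -> R) :
  Eout (fun j S => f j S + g j S) = Eout f + Eout g.
Proof.
rewrite /Eout -big_split; apply: eq_bigr => j _.
by rewrite -big_split; apply: eq_bigr => S _; rewrite mulrDr.
Qed.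

Lemma EoutB (f g : 'I_N -> {set 'I_N} -> R) :
  Eout (fun j S => f j S - g j S) = Eout f - Eout g.
Proof.
rewrite /Eout -sumrB; apply: eq_bigr => j _.
by rewrite -sumrB; apply: eq_bigr => S _; rewrite mulrBr.
Qed.

Lemma EoutZ (a : R) (f : 'I_N -> {set 'I_N} -> R) :
  Eout (fun j S => a * f j S) = a * Eout f.
Proof.
rewrite /Eout mulr_sumr; apply: eq_bigr => j _.
by rewrite mulr_sumr; apply: eq_bigr => S _; rewrite mulrCA.
Qed.

Definition flow (j : 'I_N) (S : {set 'I_N}) (v : 'I_N -> R) (i : 'I_N) : R :=
  (i \in S)%:R * (q * (v i - v j)).

Lemma LmatE (j : 'I_N) (S : {set 'I_N}) (i k : 'I_N) : j \notin S ->
  Lmat q j S i k = flow j S (fun l => (l == k)%:R) i.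
Proof.
move=> jS; rewrite /Lmat mxE /aw /flow [k == j]eq_sym.
have ij : i \in S -> i != j by move=> iS; apply: contraNneq jS => <-.
case: (boolP (i \in S)) => iS; last first.
  rewrite mul0r andbF; case: ifP => _; last by rewrite oppr0.
  by rewrite big1 // => k' _; rewrite andbF.
rewrite mul1r (ij iS) /= andbT.
case: eqP => [<-|/eqP ik].
  rewrite (bigD1 j) /=; last by rewrite eq_sym ij.
  rewrite eqxx big1 ?addr0; last by move=> k' /andP [_ /negPf ->].
  by rewrite eq_sym (negPf (ij iS)) subr0 mulr1.
by rewrite andbT; case: (j == k); rewrite /= ?subr0 ?sub0r ?mulrN ?mulr1 ?mulr0 ?oppr0.
Qed.

Lemma Lmat_mulmx (j : 'I_N) (S : {set 'I_N}) (u : 'cV[R]_N) (i : 'I_N) : j \notin S ->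
  (Lmat q j S *m u) i 0 = flow j S (fun l => u l 0) i.
Proof.
move=> jS; rewrite mxE; under eq_bigr do rewrite LmatE //.
have delta l : \sum_k (l == k)%:R * u k 0 = u l 0.
  rewrite (bigD1 l) //= eqxx mul1r big1 ?addr0 // => k kl.
  by rewrite eq_sym (negPf kl) mul0r.
rewrite /flow -[in RHS](delta i) -[in RHS](delta j) -sumrB mulr_sumr mulr_sumr.
by apply: eq_bigr => k _; ring.
Qed.

Lemma step_Lmat (j : 'I_N) (S : {set 'I_N}) (x : 'cV[R]_N) : j \notin S ->
  step q j S x = x - Lmat q j S *m x.
Proof.
move=> jS; apply/matrixP => i k; rewrite ord1 [RHS]mxE [X in _ = _ + X]mxE.
rewrite Lmat_mulmx // /step mxE /flow.
case: (boolP (i \in S)) => iS /=; last by rewrite mul0r subr0.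
have -> : i != j by apply: contraNneq jS => <-.
by rewrite /=; ring.
Qed.

Lemma ExpM_entry_ones F k :
  ((ones R N)^T *m ExpM q W F) 0 k = Eout (fun j S => \sum_i F (Lmat q j S) i k).
Proof.
rewrite /ExpM mulmx_sumr summxE; apply: eq_bigr => j _.
rewrite mulmx_sumr summxE; apply: eq_bigr => S _.
rewrite -scalemxAr mxE mxE; congr (_ * _).
by apply: eq_bigr => i _; rewrite !mxE mul1r.
Qed.

Lemma qf_ExpM (u : 'cV[R]_N) F :
  (u^T *m ExpM q W F *m u) 0 0
  = Eout (fun j S => (u^T *m F (Lmat q j S) *m u) 0 0).
Proof.
rewrite /ExpM mulmx_sumr mulmx_suml summxE; apply: eq_bigr => j _.
rewrite mulmx_sumr mulmx_suml summxE; apply: eq_bigr => S _.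
by rewrite -scalemxAr -scalemxAl mxE.
Qed.

Lemma Ex_succ t x f :
  Ex q W t.+1 x f = Ex q W t x (fun y => Eout (fun j S => f (step q j S y))).
Proof.
elim: t x => [|t IH] x //=.
by apply: eq_bigr => j _; apply: eq_bigr => S _; rewrite -IH.
Qed.

Lemma Ex_scale t x a f : Ex q W t x (fun y => a * f y) = a * Ex q W t x f.
Proof.
elim: t x => [|t IH] x //=; rewrite mulr_sumr; apply: eq_bigr => j _.
by rewrite mulr_sumr; apply: eq_bigr => S _; rewrite IH mulrCA.
Qed.

Hypothesis W01 : forall i j, 0 <= W i j <= 1.

Lemma recv01 j i : 0 <= recv j i <= 1.
Proof. by rewrite /recv; case: eqP => _; [rewrite lexx ler01 | exact: W01]. Qed.

Lemma pr_ge0 (j : 'I_N) (S : {set 'I_N}) : 0 <= pr W j S.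
Proof.
rewrite prE mulr_ge0 ?invr_ge0 ?ler0n //; apply: prodr_ge0 => i _.
by case/andP: (recv01 j i) => ? ?; case: ifP; rewrite ?subr_ge0.
Qed.

Lemma Ex_mono t x f g : (forall y, f y <= g y) -> Ex q W t x f <= Ex q W t x g.
Proof.
move=> fg; elim: t x => [|t IH] x /=; first exact: fg.
by apply: ler_sum => j _; apply: ler_sum => S _; rewrite ler_wpM2l ?pr_ge0.
Qed.

Lemma Ex_supermartingale f :
  (forall y, Eout (fun j S => f (step q j S y)) <= f y) ->
  forall t x, Ex q W t x f <= f x.
Proof.
move=> f_super; elim=> [|t IH] x //; rewrite Ex_succ.
exact: le_trans (Ex_mono t x f_super) (IH x).
Qed.

Hypothesis N_gt0 : (0 < N)%N.

Lemma Eout_cst a : Eout (fun _ _ => a) = a.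
Proof.
rewrite Eout_bern; under eq_bigr do rewrite -mulr_suml bern_total mul1r.
rewrite sumr_const card_ord -[a *+ N]mulr_natl mulrA mulVf ?mul1r //.
by rewrite pnatr_eq0 -lt0n.
Qed.

(* Wmax is a maximum of nonnegative row sums over a nonempty index set. *)
Lemma Wmax_ge0 : 0 <= Wmax W.
Proof.
apply: le_trans (le_bigmax 0 (fun i => \sum_j W i j) (Ordinal N_gt0)).
by apply: sumr_ge0 => i _; case/andP: (W01 (Ordinal N_gt0) i).
Qed.

Definition gamma : R := (Wmax W + 1) * (q / (1 - q)).

Hypotheses (q_gt0 : 0 < q) (q_lt1 : q < 1).

Lemma gamma_ge0 : 0 <= gamma.
Proof.
rewrite /gamma mulr_ge0 ?divr_ge0 ?subr_ge0 ?ltW //.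
by have := Wmax_ge0; lra.
Qed.

Hypothesis W_sym : W^T = W.

(* By symmetry, the column sums of W (the expected numbers of receivers)
   are also bounded by Wmax. *)
Lemma Wsym i j : W j i = W i j.
Proof. by rewrite -[in LHS]W_sym mxE. Qed.

Lemma colsum_le_Wmax j : \sum_i W i j <= Wmax W.
Proof.
under eq_bigr do rewrite -Wsym.
exact: (le_bigmax 0 (fun i => \sum_j W i j) j).
Qed.

Lemma recv_sum_le j : \sum_i recv j i <= Wmax W.
Proof.
apply: le_trans (colsum_le_Wmax j); apply: ler_sum => i _.
by rewrite /recv; case: eqP => [->|_]; [case/andP: (W01 j j) | ].
Qed.

Definition energy (v : 'I_N -> R) : R := \sum_j \sum_i W i j * (v i - v j) ^+ 2.

Lemma dsumZ a (F : 'I_N -> 'I_N -> R) :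
  \sum_j \sum_i a * F i j = a * \sum_j \sum_i F i j.
Proof. by rewrite mulr_sumr; apply: eq_bigr => j _; rewrite mulr_sumr. Qed.

(* Terms vanishing on the diagonal do not see the convention recv j j = 0. *)
Lemma sum_recv (F : 'I_N -> 'I_N -> R) : (forall i, F i i = 0) ->
  \sum_j \sum_i recv j i * F i j = \sum_j \sum_i W i j * F i j.
Proof.
move=> F0; apply: eq_bigr => j _; apply: eq_bigr => i _.
by rewrite /recv; case: eqP => [->|_]; rewrite ?F0 ?mulr0 ?mul0r.
Qed.

(* Symmetry of W lets us exchange the roles of i and j in weighted sums,
   so antisymmetric terms vanish and 2 v_i (v_i - v_j) averages to the
   energy. *)
Lemma sum_W_swap (F : 'I_N -> 'I_N -> R) :
  \sum_j \sum_i W i j * F i j = \sum_j \sum_i W i j * F j i.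
Proof.
rewrite exchange_big /=; apply: eq_bigr => j _; apply: eq_bigr => i _.
by rewrite Wsym.
Qed.

Lemma sum_W_antisym (v : 'I_N -> R) : \sum_j \sum_i W i j * (v i - v j) = 0.
Proof.
have := sum_W_swap (fun i j => v i - v j) => /=.
have -> : \sum_j \sum_i W i j * (v j - v i) = - \sum_j \sum_i W i j * (v i - v j).
  rewrite -sumrN; apply: eq_bigr => j _.
  by rewrite -sumrN; apply: eq_bigr => i _; ring.
lra.
Qed.

Lemma sum_W_symmetrize (v : 'I_N -> R) :
  \sum_j \sum_i W i j * (2 * v i * (v i - v j)) = energy v.
Proof.
have := sum_W_swap (fun i j => v i * (v i - v j)) => /= swap.
transitivity (\sum_j \sum_i W i j * (v i * (v i - v j))
              + \sum_j \sum_i W i j * (v i * (v i - v j))).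
  rewrite -big_split; apply: eq_bigr => j _.
  by rewrite -big_split; apply: eq_bigr => i _ /=; ring.
rewrite [X in _ + X]swap -big_split; apply: eq_bigr => j _.
by rewrite -big_split; apply: eq_bigr => i _ /=; ring.
Qed.

Lemma flow_mean (v : 'I_N -> R) : Eout (fun j S => \sum_i flow j S v i) = 0.
Proof.
rewrite Eout_bern; under eq_bigr do rewrite bern_linear.
rewrite (sum_recv (F := fun i j => q * (v i - v j))); last by move=> i; rewrite subrr mulr0.
under eq_bigr do under eq_bigr do rewrite mulrCA.
by rewrite dsumZ sum_W_antisym !mulr0.
Qed.

(* Second moment of the flow sum, by the Bernoulli bound given each sender. *)
Lemma flow_sq_le (v : 'I_N -> R) :
  Eout (fun j S => (\sum_i flow j S v i) ^+ 2)
    <= (Wmax W + 1) * (q ^+ 2 * (N%:R^-1 * energy v)).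
Proof.
rewrite Eout_bern.
have per_sender j : \sum_S bern (recv j) S * (\sum_i flow j S v i) ^+ 2
    <= (Wmax W + 1) * \sum_i recv j i * (q * (v i - v j)) ^+ 2.
  exact: bern_second_moment_le (recv01 j) (recv_sum_le j).
apply: le_trans (ler_wpM2l _ (ler_sum _ (fun j _ => per_sender j))) _.
  by rewrite invr_ge0 ler0n.
rewrite -mulr_sumr (sum_recv (F := fun i j => (q * (v i - v j)) ^+ 2)); last first.
  by move=> i; rewrite subrr mulr0 expr0n.
under eq_bigr do under eq_bigr do rewrite exprMn mulrCA.
by rewrite dsumZ le_eqVlt -/(energy v); apply/orP; left; apply/eqP; ring.
Qed.

Lemma flow_contraction (v : 'I_N -> R) :
  Eout (fun j S => \sum_i (2 * v i * flow j S v i - flow j S v i ^+ 2))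
    = (q - q ^+ 2) * (N%:R^-1 * energy v).
Proof.
transitivity (Eout (fun j S => \sum_i (i \in S)%:R *
                (2 * v i * (q * (v i - v j)) - (q * (v i - v j)) ^+ 2))).
  apply: Eout_ext => j S _; apply: eq_bigr => i _.
  by rewrite /flow; case: (i \in S); rewrite ?mul1r ?mul0r; ring.
rewrite Eout_bern; under eq_bigr do rewrite bern_linear.
rewrite (sum_recv (F := fun i j => 2 * v i * (q * (v i - v j)) - (q * (v i - v j)) ^+ 2));
  last by move=> i; rewrite subrr mulr0 expr0n /= mulr0 subr0.
transitivity (N%:R^-1 * (q * \sum_j \sum_i W i j * (2 * v i * (v i - v j))
                         - q ^+ 2 * energy v)).
  congr (_ * _); rewrite /energy -!dsumZ -sumrB; apply: eq_bigr => j _.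
  by rewrite -sumrB; apply: eq_bigr => i _; ring.
by rewrite sum_W_symmetrize; ring.
Qed.

Lemma flow_key (v : 'I_N -> R) :
  Eout (fun j S => (\sum_i flow j S v i) ^+ 2)
    <= gamma * Eout (fun j S => \sum_i (2 * v i * flow j S v i - flow j S v i ^+ 2)).
Proof.
rewrite flow_contraction; apply: le_trans (flow_sq_le v) _.
have q1 : 1 - q != 0 by rewrite subr_eq0 eq_sym lt_eqF.
have N0 : N%:R != 0 :> R by rewrite pnatr_eq0 -lt0n.
rewrite le_eqVlt; apply/orP; left; apply/eqP; rewrite /gamma; field.
by rewrite N0 q1.
Qed.

Lemma ones_ExpM : (ones R N)^T *m ExpM q W (fun L => L) = 0.
Proof.
apply/matrixP => a k; rewrite ord1 ExpM_entry_ones [RHS]mxE.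
rewrite (Eout_ext (g := fun j S => \sum_i flow j S (fun l => (l == k)%:R) i)).
  exact: flow_mean.
by move=> j S jS; apply: eq_bigr => i _; rewrite LmatE.
Qed.

Lemma ExpM_outer_le :
  loewner_le (ExpM q W (fun L => L^T *m ones R N *m (ones R N)^T *m L))
             (gamma *: ExpM q W (fun L => L + L^T - L^T *m L)).
Proof.
move=> u; set v := fun l => u l 0.
have entryBZ (A B : 'M[R]_1) (a : R) : (A - a *: B) 0 0 = A 0 0 - a * B 0 0.
  by rewrite !mxE.
rewrite mulmxBr mulmxBl -scalemxAr -scalemxAl entryBZ subr_le0 !qf_ExpM.
rewrite (Eout_ext (g := fun j S => (\sum_i flow j S v i) ^+ 2)); last first.
  move=> j S jS; rewrite qf_outer_ones; congr (_ ^+ 2).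
  by apply: eq_bigr => i _; rewrite Lmat_mulmx.
rewrite [X in _ <= _ * X](Eout_ext (g := fun j S =>
          \sum_i (2 * v i * flow j S v i - flow j S v i ^+ 2))); last first.
  by move=> j S jS /=; rewrite qf_contraction; apply: eq_bigr => i _; rewrite Lmat_mulmx.
exact: flow_key.
Qed.

Definition lyap (c : R) (y : 'cV[R]_N) : R :=
  (\sum_i (y i 0 - c)) ^+ 2 + gamma * \sum_i (y i 0 - c) ^+ 2.

(* Supermartingale property: the drift of the sum term is killed by
   flow_mean, and its second-order term is paid for by flow_key. *)
Lemma lyap_step c y : Eout (fun j S => lyap c (step q j S y)) <= lyap c y.
Proof.
pose v i := y i 0 - c.
pose D j S := \sum_i flow j S v i.
pose Q j S := \sum_i (2 * v i * flow j S v i - flow j S v i ^+ 2).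
have shift j S i : flow j S (fun l => y l 0) i = flow j S v i.
  by rewrite /flow /v; congr (_ * (_ * _)); ring.
rewrite (Eout_ext (g := fun j S =>
           lyap c y - (2 * \sum_i v i) * D j S + D j S ^+ 2 - gamma * Q j S)).
  rewrite EoutB EoutD EoutB Eout_cst !EoutZ flow_mean.
  have := flow_key v; rewrite -/D -/Q; lra.
move=> j S jS; rewrite /lyap step_Lmat //.
have entry i : (y - Lmat q j S *m y) i 0 - c = v i - flow j S v i.
  by rewrite mxE [X in _ + X - _]mxE Lmat_mulmx // shift /v; ring.
under eq_bigr do rewrite entry.
under [X in _ + gamma * X]eq_bigr do rewrite entry.
have sq : \sum_i (v i - flow j S v i) ^+ 2 = \sum_i v i ^+ 2 - Q j S.
  by rewrite /Q -sumrB; apply: eq_bigr => i _; ring.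
by rewrite sumrB sq /D /v; ring.
Qed.

Lemma Ex_lyap c t x : Ex q W t x (lyap c) <= lyap c x.
Proof. exact: Ex_supermartingale (lyap_step c) t x. Qed.

(* Pointwise comparison: by Cauchy-Schwarz, (sum_i (y_i - c))^2 <= N sum_i
   (y_i - c)^2, which is what the gamma-part of lyap pays for. *)
Lemma avg_sq_le_lyap c y :
  (avg y - c) ^+ 2 <= (N%:R * (N%:R + gamma))^-1 * lyap c y.
Proof.
have N0 : N%:R != 0 :> R by rewrite pnatr_eq0 -lt0n.
have N_pos : 0 < N%:R :> R by rewrite ltr0n.
have Ng0 : N%:R + gamma != 0 by rewrite gt_eqF //; have := gamma_ge0; lra.
set Z := \sum_i (y i 0 - c); set s := \sum_i (y i 0 - c) ^+ 2.
have avgE : avg y - c = N%:R^-1 * Z.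
  by rewrite /Z /avg sumrB sumr_const card_ord -[c *+ N]mulr_natl; field.
have cs : Z ^+ 2 <= N%:R * s.
  have sum1 : \sum_i (1 : R) * (y i 0 - c) = Z.
    by apply: eq_bigr => i _; rewrite mul1r.
  have sum2 : \sum_i (1 : R) * (y i 0 - c) ^+ 2 = s.
    by apply: eq_bigr => i _; rewrite mul1r.
  have := weighted_cauchy_schwarz (fun i => y i 0 - c) (fun _ : 'I_N => @ler01 R).
  by rewrite /= sum1 sum2 sumr_const card_ord.
rewrite avgE /lyap -/Z -/s -subr_ge0.
have -> : (N%:R * (N%:R + gamma))^-1 * (Z ^+ 2 + gamma * s) - (N%:R^-1 * Z) ^+ 2
          = gamma * (N%:R * s - Z ^+ 2) / (N%:R ^+ 2 * (N%:R + gamma)).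
  by field; rewrite Ng0 N0.
apply: divr_ge0; first by rewrite mulr_ge0 ?gamma_ge0 // subr_ge0.
by rewrite mulr_ge0 ?sqr_ge0 // addr_ge0 ?ler0n ?gamma_ge0.
Qed.

(* Around the initial average the sum term of lyap vanishes. *)
Lemma lyap_avg x :
  (N%:R * (N%:R + gamma))^-1 * lyap (avg x) x = gamma / (N%:R + gamma) * Var x.
Proof.
have N0 : N%:R != 0 :> R by rewrite pnatr_eq0 -lt0n.
have N_pos : 0 < N%:R :> R by rewrite ltr0n.
have Ng0 : N%:R + gamma != 0 by rewrite gt_eqF //; have := gamma_ge0; lra.
have dev0 : \sum_i (x i 0 - avg x) = 0.
  rewrite sumrB sumr_const card_ord -[avg x *+ N]mulr_natl /avg mulrA.
  by rewrite mulfV // mul1r subrr.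
rewrite /lyap /Var dev0 expr2 mul0r add0r; field.
by rewrite Ng0 N0.
Qed.

Lemma mean_square_deviation x0 t :
  Ex q W t x0 (fun x => (avg x - avg x0) ^+ 2) <= gamma / (N%:R + gamma) * Var x0.
Proof.
apply: le_trans (Ex_mono t x0 (avg_sq_le_lyap (avg x0))) _.
rewrite Ex_scale -lyap_avg ler_wpM2l ?Ex_lyap // invr_ge0 mulr_ge0 ?ler0n //.
by rewrite addr_ge0 ?ler0n ?gamma_ge0.
Qed.

End Model.

Theorem proposition5 (R : realFieldType) (N : nat) (q : R) (W : 'M[R]_N) :
  (0 < N)%N ->
  0 < q -> q < 1 ->
  (forall i j, 0 <= W i j <= 1) ->
  W^T = W ->
  let gamma := (Wmax W + 1) * (q / (1 - q)) in
  ((ones R N)^T *m ExpM q W (fun L => L) = 0)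
  /\ loewner_le (ExpM q W (fun L => L^T *m ones R N *m (ones R N)^T *m L))
                (gamma *: ExpM q W (fun L => L + L^T - L^T *m L))
  /\ (forall (x0 : 'cV[R]_N) (t : nat),
        Ex q W t x0 (fun x => (avg x - avg x0) ^+ 2)
          <= gamma / (N%:R + gamma) * Var x0).
Proof.
move=> N_gt0 q_gt0 q_lt1 W01 W_sym gamma.
split; first exact: ones_ExpM.
split; first exact: ExpM_outer_le.
exact: mean_square_deviation.
Qed.
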